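(* In the logic $\mathsf{LC}$ (intuitionistic propositional logic extended with $(p\to q)\vee(q\to p)$, algebraized by Gödel algebras), the Takeuti–Titani (density) $\Pi_2$-rule $$\frac{\forall r\,\big(g\to((p\to r)\vee(r\to q)\vee c)\big)}{g\to((p\to q)\vee c)}$$ is admissible. Moreover, the uniform post-interpolant of $g\to((p\to r)\vee(r\to q)\vee c)$ with respect to $r$ (i.e. the formula $\forall_r$ of it, a formula in $g,p,q,c$ that is the strongest consequence-free-of-$r$ from below: for any $\Sigma$ not containing $r$, $\Sigma\vdash$ the formula iff $\Sigma\vdash$ the interpolant) is equivalent in $\mathsf{LC}$ to $g\to((p\to q)\vee c)$.
   Context: A $\Pi_2$-rule $\forall\overline p\,\Gamma/^2\phi$ (with $\phi$ not containing $\overline p$) is admissible over a logic $\vdash$ iff for every substitution $\sigma$ which fixes each variable of $\overline p$ and maps every other variable to a formula not containing variables of $\overline p$, $\vdash\sigma(\Gamma)$ implies $\vdash\sigma(\phi)$. Here $g,p,q,c,r$ are distinct propositional variables. *)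

From Stdlib Require Import List.

Inductive form : Type :=
| Var : nat -> form
| Bot : form
| And : form -> form -> form
| Or  : form -> form -> form
| Imp : form -> form -> form.

Fixpoint occurs (x : nat) (a : form) : Prop :=
  match a with
  | Var y => x = y
  | Bot => False
  | And a b | Or a b | Imp a b => occurs x a \/ occurs x b
  end.

Fixpoint subst (s : nat -> form) (a : form) : form :=
  match a with
  | Var y => s y
  | Bot => Bot
  | And a b => And (subst s a) (subst s b)
  | Or a b => Or (subst s a) (subst s b)
  | Imp a b => Imp (subst s a) (subst s b)
  end.

(* Hilbert-style axiomatization of LC = IPC + (a -> b) \/ (b -> a),
   given by axiom schemes (hence closed under substitution) and modus ponens. *)
Inductive LC_axiom : form -> Prop :=
| ax_K  a b   : LC_axiom (Imp a (Imp b a))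
| ax_S  a b c : LC_axiom (Imp (Imp a (Imp b c)) (Imp (Imp a b) (Imp a c)))
| ax_A1 a b   : LC_axiom (Imp (And a b) a)
| ax_A2 a b   : LC_axiom (Imp (And a b) b)
| ax_AI a b   : LC_axiom (Imp a (Imp b (And a b)))
| ax_O1 a b   : LC_axiom (Imp a (Or a b))
| ax_O2 a b   : LC_axiom (Imp b (Or a b))
| ax_OE a b c : LC_axiom (Imp (Imp a c) (Imp (Imp b c) (Imp (Or a b) c)))
| ax_EFQ a    : LC_axiom (Imp Bot a)
| ax_LIN a b  : LC_axiom (Or (Imp a b) (Imp b a)).

Inductive LC_der (Gamma : form -> Prop) : form -> Prop :=
| der_hyp a : Gamma a -> LC_der Gamma a
| der_ax a : LC_axiom a -> LC_der Gamma a
| der_mp a b : LC_der Gamma (Imp a b) -> LC_der Gamma a -> LC_der Gamma b.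

Definition LC_thm (a : form) : Prop := LC_der (fun _ => False) a.

Definition TT_premise (g p q c r : nat) : form :=
  Imp (Var g) (Or (Or (Imp (Var p) (Var r)) (Imp (Var r) (Var q))) (Var c)).

Definition TT_conclusion (g p q c : nat) : form :=
  Imp (Var g) (Or (Imp (Var p) (Var q)) (Var c)).

Definition Pi2_admissible (r : nat) (premise concl : form) : Prop :=
  forall s : nat -> form,
    s r = Var r ->
    (forall x, x <> r -> ~ occurs r (s x)) ->
    LC_thm (subst s premise) -> LC_thm (subst s concl).

Definition uniform_post_interpolant (r : nat) (phi psi : form) : Prop :=
  ~ occurs r psi /\
  forall Sigma : form -> Prop,
    (forall s, Sigma s -> ~ occurs r s) ->
    (LC_der Sigma phi <-> LC_der Sigma psi).

(* LC is strongly complete for valuations in Goedel chains (bounded linear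
   orders with [a -> b = 1] if [a <= b] and [= b] otherwise).  So suppose a
   valuation refutes [g -> ((p -> q) \/ c)], i.e. [g > max (p -> q, c)].  Then
   [q < 1] and [p > q] (otherwise [p -> q = 1]).  Insert a new point [r]
   immediately above the principal downset of [q]: then [p -> r = r],
   [r -> q = q] and [r < g], so the premise is refuted as well, while every
   [r]-free formula keeps its value.  Conversely [p -> q] entails
   [(p -> r) \/ (r -> q)]: by linearity either [p -> r], or [r -> p] and then
   [r -> q]. *)

From Stdlib Require Import Classical ClassicalEpsilon Arith Lia Cantor.

Definition extend (G : form -> Prop) (a : form) : form -> Prop :=
  fun x => G x \/ x = a.

Lemma LC_der_mono G D a : LC_der G a -> (forall x, G x -> D x) -> LC_der D a.
Proof.
  induction 1; intros GD.
  - apply der_hyp; auto.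
  - apply der_ax; auto.
  - eapply der_mp; eauto.
Qed.

Lemma der_imp_refl G a : LC_der G (Imp a a).
Proof.
  eapply der_mp; [eapply der_mp|].
  - apply der_ax, (ax_S a (Imp a a) a).
  - apply der_ax, ax_K.
  - apply der_ax, (ax_K a a).
Qed.

Lemma LC_deduction G a b : LC_der (extend G a) b -> LC_der G (Imp a b).
Proof.
  induction 1 as [x [Gx| ->]|x Ax|x y _ IHxy _ IHx].
  - eapply der_mp; [apply der_ax, ax_K|apply der_hyp; auto].
  - apply der_imp_refl.
  - eapply der_mp; [apply der_ax, ax_K|apply der_ax; auto].
  - eapply der_mp; [eapply der_mp; [apply der_ax, ax_S|exact IHxy]|exact IHx].
Qed.

Lemma der_extend_hyp G a : LC_der (extend G a) a.
Proof. apply der_hyp; right; reflexivity. Qed.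

Lemma der_extend G a b : LC_der G b -> LC_der (extend G a) b.
Proof. intros D; eapply LC_der_mono; [exact D|unfold extend; auto]. Qed.

Lemma der_imp_elim_extend G a b : LC_der G (Imp a b) -> LC_der (extend G a) b.
Proof. intros D; eapply der_mp; [apply der_extend, D|apply der_extend_hyp]. Qed.

Lemma der_and_intro G a b : LC_der G a -> LC_der G b -> LC_der G (And a b).
Proof. intros Da Db; eapply der_mp; [eapply der_mp; [apply der_ax, ax_AI|exact Da]|exact Db]. Qed.

Lemma der_or_introl G a b : LC_der G a -> LC_der G (Or a b).
Proof. intros Da; eapply der_mp; [apply der_ax, ax_O1|exact Da]. Qed.

Lemma der_or_intror G a b : LC_der G b -> LC_der G (Or a b).
Proof. intros Db; eapply der_mp; [apply der_ax, ax_O2|exact Db]. Qed.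

Lemma der_or_imp G a b c :
  LC_der G (Imp a c) -> LC_der G (Imp b c) -> LC_der G (Imp (Or a b) c).
Proof.
  intros Dac Dbc; eapply der_mp; [eapply der_mp; [apply der_ax, ax_OE|exact Dac]|exact Dbc].
Qed.

Lemma der_or_elim G a b c :
  LC_der G (Or a b) -> LC_der G (Imp a c) -> LC_der G (Imp b c) -> LC_der G c.
Proof. intros Dab Dac Dbc; eapply der_mp; [apply der_or_imp; [exact Dac|exact Dbc]|exact Dab]. Qed.

Lemma der_imp_and G x a b :
  LC_der G (Imp x a) -> LC_der G (Imp x b) -> LC_der G (Imp x (And a b)).
Proof.
  intros Da Db; apply LC_deduction, der_and_intro; apply der_imp_elim_extend; auto.
Qed.

Lemma der_imp_trans G a b c :
  LC_der G (Imp a b) -> LC_der G (Imp b c) -> LC_der G (Imp a c).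
Proof.
  intros Dab Dbc; apply LC_deduction.
  eapply der_mp; [apply der_extend, Dbc|apply der_imp_elim_extend, Dab].
Qed.

Lemma der_imp_const G a b : LC_der G b -> LC_der G (Imp a b).
Proof. intros D; apply LC_deduction, der_extend, D. Qed.

Lemma der_lin G a b : LC_der G (Or (Imp a b) (Imp b a)).
Proof. apply der_ax, ax_LIN. Qed.

(** * Prime theories *)

Definition prime_theory (T : form -> Prop) : Prop :=
  forall a b, LC_der T (Or a b) -> LC_der T a \/ LC_der T b.

Fixpoint form_code (a : form) : nat :=
  match a with
  | Var n => to_nat (0, n)
  | Bot => to_nat (1, 0)
  | And a b => to_nat (2, to_nat (form_code a, form_code b))
  | Or a b => to_nat (3, to_nat (form_code a, form_code b))
  | Imp a b => to_nat (4, to_nat (form_code a, form_code b))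
  end.

Lemma to_nat_inj (x y : nat * nat) : to_nat x = to_nat y -> x = y.
Proof. intros E; rewrite <- (cancel_of_to x), <- (cancel_of_to y), E; reflexivity. Qed.

Local Opaque to_nat.

Lemma form_code_inj a b : form_code a = form_code b -> a = b.
Proof.
  revert b; induction a; destruct b; cbn [form_code]; intros E; apply to_nat_inj in E;
    try discriminate; try reflexivity; injection E as E; subst; auto;
    apply to_nat_inj in E; injection E as E1 E2; f_equal; auto.
Qed.

(* A left inverse of [form_code], chosen classically; junk value [Bot]. *)
Definition form_decode (n : nat) : form :=
  match excluded_middle_informative (exists a, form_code a = n) with
  | left H => proj1_sig (constructive_indefinite_description _ H)
  | right _ => Bot
  end.

Lemma form_codeK a : form_decode (form_code a) = a.
Proof.
  unfold form_decode; destruct excluded_middle_informative as [H|H].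
  - destruct constructive_indefinite_description as [b Hb]; apply form_code_inj, Hb.
  - exfalso; apply H; eauto.
Qed.

Section Lindenbaum.
Variable Sigma : form -> Prop.
Variable phi : form.
Hypothesis Sigma_phi : ~ LC_der Sigma phi.

Fixpoint stage (n : nat) : form -> Prop :=
  match n with
  | 0 => Sigma
  | S n => fun a => stage n a \/
           (a = form_decode n /\ ~ LC_der (extend (stage n) (form_decode n)) phi)
  end.

Definition limit (a : form) : Prop := exists n, stage n a.

Lemma stage_mono n m : n <= m -> forall a, stage n a -> stage m a.
Proof. induction 1; simpl; auto. Qed.

Lemma stage_unprovable n : ~ LC_der (stage n) phi.
Proof.
  induction n as [|n IHn]; simpl; auto.
  destruct (classic (LC_der (extend (stage n) (form_decode n)) phi)) as [D|ND];
    intros D'; [apply IHn | apply ND]; eapply LC_der_mono; eauto.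
  - intros x [Hx|[_ Hx]]; tauto.
  - intros x [Hx|[-> _]]; [left|right]; auto.
Qed.

Lemma limit_compact a : LC_der limit a -> exists n, LC_der (stage n) a.
Proof.
  induction 1 as [x [n Hx]|x Ax|x y _ [n1 D1] _ [n2 D2]].
  - exists n; apply der_hyp, Hx.
  - exists 0; apply der_ax, Ax.
  - exists (max n1 n2).
    eapply der_mp; eapply LC_der_mono; eauto; apply stage_mono; lia.
Qed.

Lemma limit_unprovable : ~ LC_der limit phi.
Proof. intros D; destruct (limit_compact _ D) as [n Dn]; exact (stage_unprovable n Dn). Qed.

Lemma limit_maximal a : limit a \/ LC_der (extend limit a) phi.
Proof.
  destruct (classic (LC_der (extend (stage (form_code a)) a) phi)) as [D|ND].
  - right; eapply LC_der_mono; [exact D|].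
    intros x [Hx|Hx]; [left; exists (form_code a)|right]; auto.
  - left; exists (S (form_code a)); simpl; right; rewrite form_codeK; auto.
Qed.

Lemma limit_prime : prime_theory limit.
Proof.
  intros a b Dab; apply NNPP; intros Nab.
  destruct (limit_maximal a) as [Ha|Da]; [apply Nab; left; apply der_hyp, Ha|].
  destruct (limit_maximal b) as [Hb|Db]; [apply Nab; right; apply der_hyp, Hb|].
  apply limit_unprovable; eapply der_or_elim; [exact Dab|apply LC_deduction..]; eauto.
Qed.

End Lindenbaum.

Lemma lindenbaum Sigma phi : ~ LC_der Sigma phi ->
  exists T, (forall a, Sigma a -> T a) /\ ~ LC_der T phi /\ prime_theory T.
Proof.
  intros ND; exists (limit Sigma phi); repeat split.
  - intros a Ha; exists 0; exact Ha.
  - apply limit_unprovable, ND.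
  - apply limit_prime, ND.
Qed.

(** * Goedel chains *)

(* [le] is only a total preorder; this lets formulas modulo provable
   equivalence form a chain without taking a quotient. *)

Record chain := {
  carrier :> Type;
  le : carrier -> carrier -> Prop;
  le_refl : forall x, le x x;
  le_trans : forall x y z, le x y -> le y z -> le x z;
  le_total : forall x y, le x y \/ le y x;
  top : carrier;
  bot : carrier;
  top_max : forall x, le x top;
  bot_min : forall x, le bot x }.

Definition dec (P : Prop) : {P} + {~ P} := excluded_middle_informative P.

Fixpoint eval (C : chain) (v : nat -> C) (a : form) : C :=
  match a with
  | Var x => v x
  | Bot => bot C
  | And a b => if dec (le C (eval C v a) (eval C v b)) then eval C v a else eval C v b
  | Or a b => if dec (le C (eval C v a) (eval C v b)) then eval C v b else eval C v a
  | Imp a b => if dec (le C (eval C v a) (eval C v b)) then top C else eval C v b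
  end.

Definition valid (C : chain) (v : nat -> C) (a : form) : Prop := le C (top C) (eval C v a).

Lemma eval_agree C v w a :
  (forall x, occurs x a -> v x = w x) -> eval C v a = eval C w a.
Proof. induction a; simpl; intros E; auto; rewrite IHa1, IHa2; auto. Qed.

(* Routine order reasoning in a chain: case on every comparison hidden in
   [eval], then close the goal by contradiction from the totality, transitivity
   and bound facts about the points involved. *)
Ltac destr_dec :=
  repeat match goal with
  | |- context [dec ?P] =>
      lazymatch P with context [dec _] => fail | _ => destruct (dec P) end
  | H : context [dec ?P] |- _ =>
      lazymatch P with context [dec _] => fail | _ => destruct (dec P) end
  end.

Ltac chain_contra C :=
  try (apply NNPP; intro);
  repeat match goal with
  | H : ~ le C ?x ?y |- _ =>
      lazymatch goal with
      | _ : le C y x |- _ => fail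
      | _ => assert (le C y x) by (destruct (le_total C x y); tauto)
      end
  end;
  repeat match goal with
  | H : context [le C ?x _] |- _ =>
      lazymatch goal with _ : le C x (top C) |- _ => fail | _ => pose proof (top_max C x) end
  | H : context [le C _ ?x] |- _ =>
      lazymatch goal with _ : le C x (top C) |- _ => fail | _ => pose proof (top_max C x) end
  end;
  repeat match goal with
  | H : le C ?x _ |- _ =>
      lazymatch goal with _ : le C (bot C) x |- _ => fail | _ => pose proof (bot_min C x) end
  | H : le C _ ?x |- _ =>
      lazymatch goal with _ : le C (bot C) x |- _ => fail | _ => pose proof (bot_min C x) end
  end;
  repeat match goal with
  | H1 : le C ?x ?y, H2 : le C ?y ?z |- _ =>
      lazymatch goal with
      | _ : le C x z |- _ => fail
      | _ => pose proof (le_trans C x y z H1 H2)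
      end
  end;
  solve [match goal with
  | H : ~ ?P, H' : ?P |- _ => exact (H H')
  | H : ~ le C ?x ?x |- _ => exact (H (le_refl C x))
  end].

Lemma valid_axiom C v a : LC_axiom a -> valid C v a.
Proof. unfold valid; destruct 1; simpl; destr_dec; chain_contra C. Qed.

Lemma LC_sound C v G a :
  LC_der G a -> (forall b, G b -> valid C v b) -> valid C v a.
Proof.
  induction 1 as [x Gx|x Ax|x y _ IHxy _ IHx]; intros VG; auto.
  - apply valid_axiom, Ax.
  - specialize (IHxy VG); specialize (IHx VG); unfold valid in *; simpl in *.
    destr_dec; chain_contra C.
Qed.

(** * The canonical chain of a prime theory *)

Section Canonical.
Variable T : form -> Prop.
Hypothesis T_prime : prime_theory T.

Definition canon_le (a b : form) : Prop := LC_der T (Imp a b).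

Lemma canon_le_total a b : canon_le a b \/ canon_le b a.
Proof. apply T_prime, der_lin. Qed.

Lemma canon_le_flip a b : ~ canon_le a b -> canon_le b a.
Proof. destruct (canon_le_total a b); tauto. Qed.

Lemma canon_le_top a : canon_le a (Imp Bot Bot).
Proof. apply der_imp_const, der_imp_refl. Qed.

Lemma canon_le_bot a : canon_le Bot a.
Proof. apply der_ax, ax_EFQ. Qed.

Definition canon : chain := {|
  carrier := form; le := canon_le; le_refl := der_imp_refl T;
  le_trans := der_imp_trans T; le_total := canon_le_total;
  top := Imp Bot Bot; bot := Bot; top_max := canon_le_top; bot_min := canon_le_bot |}.

(* Linearity for [a -> b] and [a]: [(a -> b) -> a] yields [(a -> b) -> b],
   while [a -> (a -> b)] would prove [a -> b]. *)
Lemma prime_imp_unprovable a b :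
  ~ LC_der T (Imp a b) -> canon_le (Imp a b) b.
Proof.
  intros Nab; destruct (T_prime _ _ (der_lin T (Imp a b) a)) as [D|D].
  - apply LC_deduction; eapply der_mp; [apply der_extend_hyp|].
    apply der_imp_elim_extend, D.
  - exfalso; apply Nab, LC_deduction.
    eapply der_mp; [apply der_imp_elim_extend, D|apply der_extend_hyp].
Qed.

Lemma eval_canon a : canon_le (eval canon Var a) a /\ canon_le a (eval canon Var a).
Proof.
  induction a as [x| |a [Ia1 Ia2] b [Ib1 Ib2]|a [Ia1 Ia2] b [Ib1 Ib2]|a [Ia1 Ia2] b [Ib1 Ib2]];
    simpl; try solve [split; apply der_imp_refl];
    destruct dec as [l|l]; simpl in l; split.
  - apply der_imp_and; eauto using der_imp_trans.
  - eapply der_imp_trans; [apply der_ax, ax_A1|exact Ia2].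
  - apply canon_le_flip in l; apply der_imp_and; eauto using der_imp_trans.
  - eapply der_imp_trans; [apply der_ax, ax_A2|exact Ib2].
  - eapply der_imp_trans; [exact Ib1|apply der_ax, ax_O2].
  - apply der_or_imp; eauto using der_imp_trans.
  - eapply der_imp_trans; [exact Ia1|apply der_ax, ax_O1].
  - apply canon_le_flip in l; apply der_or_imp; eauto using der_imp_trans.
  - apply der_imp_const; eauto using der_imp_trans.
  - apply der_imp_const, der_imp_refl.
  - eapply der_imp_trans; [exact Ib1|apply der_ax, ax_K].
  - eapply der_imp_trans; [apply prime_imp_unprovable|exact Ib2].
    intros D; apply l; eapply der_imp_trans; [exact Ia1|eapply der_imp_trans; [exact D|exact Ib2]].
Qed.

Lemma canon_valid a : valid canon Var a <-> LC_der T a.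
Proof.
  unfold valid; simpl; destruct (eval_canon a) as [E1 E2]; split; intros D.
  - eapply der_mp; [exact E1|]; eapply der_mp; [exact D|apply der_imp_refl].
  - apply der_imp_const; eapply der_mp; [exact E2|exact D].
Qed.

End Canonical.

Lemma LC_complete Sigma a :
  ~ LC_der Sigma a ->
  exists T (T_prime : prime_theory T),
    (forall b, Sigma b -> valid (canon T T_prime) Var b) /\
    ~ valid (canon T T_prime) Var a.
Proof.
  intros ND; destruct (lindenbaum _ _ ND) as [T [ST [NT T_prime]]].
  exists T, T_prime; split.
  - intros b Hb; apply canon_valid, der_hyp, ST, Hb.
  - rewrite canon_valid; exact NT.
Qed.

(** * Inserting a point above a cut *)

Section Cut.
Variable C : chain.
Variable q : C.
Hypothesis q_lt_top : ~ le C (top C) q.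

(* [None] is a new point, above every [x <= q] and below every other [x]. *)
Definition cut_le (x y : option C) : Prop :=
  match x, y with
  | Some x, Some y => le C x y
  | Some x, None => le C x q
  | None, Some y => ~ le C y q
  | None, None => True
  end.

Lemma cut_le_refl x : cut_le x x.
Proof. destruct x; simpl; auto using le_refl. Qed.

Lemma cut_le_trans x y z : cut_le x y -> cut_le y z -> cut_le x z.
Proof.
  destruct x as [x|], y as [y|], z as [z|]; simpl; intros Hxy Hyz; auto;
    try (intros Hzq; apply Hxy); try (intros Hzq; apply Hyz);
    eauto using le_trans; destr_dec; chain_contra C.
Qed.

Lemma cut_le_total x y : cut_le x y \/ cut_le y x.
Proof.
  destruct x as [x|], y as [y|]; simpl; auto using le_total;
    [destruct (classic (le C x q))|destruct (classic (le C y q))]; auto.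
Qed.

Lemma cut_le_top x : cut_le x (Some (top C)).
Proof. destruct x; simpl; auto using top_max. Qed.

Lemma cut_le_bot x : cut_le (Some (bot C)) x.
Proof. destruct x; simpl; apply bot_min. Qed.

Definition cut_chain : chain := {|
  carrier := option C; le := cut_le; le_refl := cut_le_refl;
  le_trans := cut_le_trans; le_total := cut_le_total;
  top := Some (top C); bot := Some (bot C);
  top_max := cut_le_top; bot_min := cut_le_bot |}.

Lemma eval_cut_chain v a :
  eval cut_chain (fun x => Some (v x)) a = Some (eval C v a).
Proof. induction a; simpl; auto; rewrite IHa1, IHa2; destr_dec; simpl in *; tauto. Qed.

End Cut.

Definition density_premise (G P Q Cf R : form) : form :=
  Imp G (Or (Or (Imp P R) (Imp R Q)) Cf).

Definition density_conclusion (G P Q Cf : form) : form :=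
  Imp G (Or (Imp P Q) Cf).

Lemma refuted_density_conclusion C v G P Q Cf :
  ~ valid C v (density_conclusion G P Q Cf) -> ~ le C (top C) (eval C v Q).
Proof.
  unfold valid, density_conclusion; cbn [eval]; intros Nv Hq.
  apply Nv; destr_dec; chain_contra C.
Qed.

Lemma cut_refutes_density_premise C v G P Q Cf r
    (q_lt_top : ~ le C (top C) (eval C v Q)) (w : nat -> cut_chain C _ q_lt_top) :
  w r = None ->
  eval _ w G = Some (eval C v G) -> eval _ w P = Some (eval C v P) ->
  eval _ w Q = Some (eval C v Q) -> eval _ w Cf = Some (eval C v Cf) ->
  ~ valid C v (density_conclusion G P Q Cf) ->
  ~ valid _ w (density_premise G P Q Cf (Var r)).
Proof.
  unfold valid, density_conclusion, density_premise; cbn [eval].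
  intros -> -> -> -> -> Nv Hw.
  apply Nv; destr_dec; simpl in *; chain_contra C.
Qed.

Lemma density_rule_derivable Sigma G P Q Cf r :
  (forall b, Sigma b -> ~ occurs r b) ->
  ~ occurs r G -> ~ occurs r P -> ~ occurs r Q -> ~ occurs r Cf ->
  LC_der Sigma (density_premise G P Q Cf (Var r)) ->
  LC_der Sigma (density_conclusion G P Q Cf).
Proof.
  intros Sigma_r G_r P_r Q_r Cf_r D; apply NNPP; intros ND.
  destruct (LC_complete _ _ ND) as [T [T_prime [VSigma Nv]]].
  set (C := canon T T_prime) in *.
  pose proof (refuted_density_conclusion _ _ _ _ _ _ Nv) as q_lt_top.
  set (w := (fun x => if Nat.eq_dec x r then None else Some (Var x))
            : nat -> cut_chain C _ q_lt_top).
  assert (Ew : forall a, ~ occurs r a -> eval _ w a = Some (eval C Var a)).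
  { intros a a_r; rewrite <- (eval_cut_chain C _ q_lt_top); apply eval_agree.
    intros x Hx; unfold w; destruct (Nat.eq_dec x r); [subst; contradiction|reflexivity]. }
  apply (cut_refutes_density_premise C Var G P Q Cf r q_lt_top w); auto.
  - unfold w; destruct (Nat.eq_dec r r); congruence.
  - apply (LC_sound _ w Sigma _ D); intros b Hb.
    unfold valid; rewrite Ew; auto; apply VSigma, Hb.
Qed.

Lemma density_conclusion_premise Sigma G P Q Cf R :
  LC_der Sigma (density_conclusion G P Q Cf) -> LC_der Sigma (density_premise G P Q Cf R).
Proof.
  intros D; apply LC_deduction; eapply der_mp; [|apply der_imp_elim_extend, D].
  apply der_or_imp; [|apply der_ax, ax_O2].
  apply LC_deduction; eapply der_or_elim; [apply (der_lin _ P R)|..].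
  - eapply der_imp_trans; apply der_ax, ax_O1.
  - apply LC_deduction, der_or_introl, der_or_intror.
    eapply der_imp_trans; [apply der_extend_hyp|apply der_extend, der_extend_hyp].
Qed.

Theorem mainTheorem11 (g p q c r : nat) :
  g <> p -> g <> q -> g <> c -> g <> r ->
  p <> q -> p <> c -> p <> r ->
  q <> c -> q <> r -> c <> r ->
  Pi2_admissible r (TT_premise g p q c r) (TT_conclusion g p q c) /\
  uniform_post_interpolant r (TT_premise g p q c r) (TT_conclusion g p q c).
Proof.
  intros _ _ _ Hgr _ _ Hpr _ Hqr Hcr; repeat split.
  - intros s s_r s_free D; simpl in D; rewrite s_r in D.
    apply (density_rule_derivable _ _ _ _ _ r); auto.
  - simpl; intuition congruence.
  - apply (density_rule_derivable _ _ _ _ _ r); auto; simpl; congruence.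
  - apply density_conclusion_premise.
Qed.
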